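(* Let $m\ge 2$. If the Fibonacci sequence is defective mod $m$, then every Gibonacci sequence $\{G_n(a,b)\}$ (with $\gcd(a,b)=1$) is defective mod $m$.
   Context: For integers $a,b$ with $\gcd(a,b)=1$, the Gibonacci sequence $\{G_n(a,b)\}_{n\ge1}$ is defined by $G_1=a$, $G_2=b$, $G_{n+1}=G_{n-1}+G_n$. The Fibonacci sequence is $F_n=G_n(1,1)$. A sequence is complete mod $m$ if every residue class modulo $m$ contains some term of the sequence, and defective mod $m$ otherwise. *)

From HB Require Import structures.
From mathcomp Require Import all_boot all_order all_algebra.
Set Implicit Arguments. Unset Strict Implicit. Unset Printing Implicit Defensive.
Import Order.TTheory GRing.Theory Num.Theory.
Local Open Scope ring_scope.

(* gib a b n = G_{n+1}(a,b) : gib a b 0 = G_1 = a, gib a b 1 = G_2 = b. *)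
Fixpoint gib_aux (a b : int) (n : nat) : int * int :=
  match n with
  | 0%N => (a, b)
  | n'.+1 => let p := gib_aux a b n' in (p.2, p.1 + p.2)
  end.

Definition gib (a b : int) (n : nat) : int := (gib_aux a b n).1.

(* G_n(a,b) for n >= 1 (paper indexing). *)
Definition G (a b : int) (n : nat) : int := gib a b n.-1.

Definition complete_mod (s : nat -> int) (m : int) : Prop :=
  forall r : int, exists n : nat, (1 <= n)%N /\ (s n = r %[mod m])%Z.

Definition defective_mod (s : nat -> int) (m : int) : Prop :=
  ~ complete_mod s m.

Definition Fib (n : nat) : int := G 1 1 n.

From HB Require Import structures.
From mathcomp Require Import all_boot all_order all_algebra.
From mathcomp Require Import zify.
Import Order.TTheory GRing.Theory Num.Theory.
Local Open Scope ring_scope.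

(* Suppose some Gibonacci sequence g = G(a,b), gcd(a,b) = 1, is
   complete mod m; we show that the Fibonacci sequence is complete mod m.
   Completeness gives a term x = g_n divisible by m; its successor c = g_{n+1}
   is coprime to x (consecutive terms keep gcd(a,b) = 1), hence to m.  From
   index n on the sequence restarts from the pair (x, c) == (0, c), so by
   linearity of the recurrence g_{n+k} == c F_k (mod m).  Given a residue r,
   completeness gives some g_j == c r; since g is purely periodic mod m
   (pigeonhole on consecutive pairs, then run the recurrence backwards), the
   value g_j recurs at an index n + k with k >= 1, so c F_k == c r and
   cancelling the unit c gives F_k == r. *)

Lemma gib0 (a b : int) : gib a b 0 = a. Proof. by []. Qed.
Lemma gib1 (a b : int) : gib a b 1 = b. Proof. by []. Qed.
Lemma gibSS (a b : int) (n : nat) : gib a b n.+2 = gib a b n + gib a b n.+1.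
Proof. by rewrite /gib /=. Qed.

Lemma nat_ind2 (P : nat -> Prop) : P 0%N -> P 1%N ->
  (forall n, P n -> P n.+1 -> P n.+2) -> forall n, P n.
Proof.
move=> P0 P1 PSS n; suff: P n /\ P n.+1 by case.
by elim: n => [|n [Pn PSn]]; split => //; apply: PSS.
Qed.

Lemma gib_shift (a b : int) (n k : nat) :
  gib a b (n + k) = gib (gib a b n) (gib a b n.+1) k.
Proof.
elim/nat_ind2: k => [||k IHk IHSk]; first by rewrite addn0.
  by rewrite addn1.
by rewrite !addnS gibSS -addnS IHk IHSk gibSS.
Qed.

Lemma gib_lin (x y : int) (k : nat) :
  gib x y k = x * gib 1 0 k + y * gib 0 1 k.
Proof.
elim/nat_ind2: k => [||k IHk IHSk].
- by rewrite !gib0 mulr1 mulr0 addr0.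
- by rewrite !gib1 mulr0 mulr1 add0r.
by rewrite !gibSS IHk IHSk !mulrDr addrACA.
Qed.

Lemma gib_gcd (a b : int) (n : nat) :
  gcdz (gib a b n) (gib a b n.+1) = gcdz a b.
Proof. by elim: n => [//|n IHn]; rewrite gibSS gcdzDr gcdzC. Qed.

Lemma Fib_gib (k : nat) : (1 <= k)%N -> Fib k = gib 0 1 k.
Proof. by case: k => [//|k] _; rewrite /Fib /G /= -add1n gib_shift. Qed.

Lemma eqz_modD (d x x' y y' : int) :
  (x = x' %[mod d])%Z -> (y = y' %[mod d])%Z -> (x + y = x' + y' %[mod d])%Z.
Proof. by move=> ex ey; rewrite -modzDm ex ey modzDm. Qed.

Lemma eqz_modM (d x x' y y' : int) :
  (x = x' %[mod d])%Z -> (y = y' %[mod d])%Z -> (x * y = x' * y' %[mod d])%Z.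
Proof. by move=> ex ey; rewrite -modzMm ex ey modzMm. Qed.

Lemma eqz_modN (d x x' : int) :
  (x = x' %[mod d])%Z -> (- x = - x' %[mod d])%Z.
Proof. by move=> ex; rewrite -modzNm ex modzNm. Qed.

Lemma eqz_mod_mulKl (d c x y : int) :
  coprimez d c -> (c * x = c * y %[mod d])%Z -> (x = y %[mod d])%Z.
Proof.
move=> co_dc ecxy; apply/eqP.
by rewrite eqz_mod_dvd -(Gauss_dvdzr (x - y) co_dc) mulrBr -eqz_mod_dvd ecxy.
Qed.

Lemma gib_congr (d x x' y y' : int) (k : nat) :
  (x = x' %[mod d])%Z -> (y = y' %[mod d])%Z ->
  (gib x y k = gib x' y' k %[mod d])%Z.
Proof.
by move=> ex ey; rewrite (gib_lin x) (gib_lin x'); apply: eqz_modD; apply: eqz_modM.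
Qed.

Lemma gib_after_zero (d a b : int) (n k : nat) :
  (d %| gib a b n)%Z ->
  (gib a b (n + k) = gib a b n.+1 * gib 0 1 k %[mod d])%Z.
Proof.
move=> /dvdz_mod0P gn0; rewrite gib_shift gib_lin.
by rewrite -modzDml -modzMml gn0 mul0r mod0z add0r.
Qed.

Lemma pigeonhole (T T' : finType) (f : T -> T') :
  (#|T'| < #|T|)%N -> exists x, exists2 y, x != y & f x = f y.
Proof.
move=> ltT'T; apply/injectivePn/injectiveP => f_inj.
by have := leq_card f f_inj; rewrite leqNgt ltT'T.
Qed.

Definition residue (m : nat) (x : int) : 'I_m.+1 := inord `|(x %% m.+1%:Z)%Z|.

Lemma residue_eq (m : nat) (x y : int) :
  residue m x = residue m y -> (x = y %[mod m.+1%:Z])%Z.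
Proof.
have res_lt z : (`|(z %% m.+1%:Z)%Z| < m.+1)%N.
  by have := @ltz_pmod z m.+1%:Z; have := @modz_ge0 z m.+1%:Z; lia.
move=> /(congr1 val); rewrite /= !inordK ?res_lt //.
by have := @modz_ge0 x m.+1%:Z; have := @modz_ge0 y m.+1%:Z; lia.
Qed.

Lemma gib_pair_collision (m : nat) (a b : int) : (0 < m)%N ->
  exists i j, [/\ (i < j)%N, (gib a b i = gib a b j %[mod m%:Z])%Z
                & (gib a b i.+1 = gib a b j.+1 %[mod m%:Z])%Z].
Proof.
case: m => [//|m] _.
pose pair (i : 'I_(m.+1 * m.+1).+1) :=
  (residue m (gib a b i), residue m (gib a b i.+1)).
have [i [j neq_ij [/residue_eq ei /residue_eq ei1]]] : exists i, exists2 j,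
    i != j & pair i = pair j.
  by apply: pigeonhole; rewrite card_prod !card_ord.
case: (ltngtP i j) => [lt_ij|lt_ji|/val_inj eq_ij].
- by exists i, j.
- by exists j, i.
- by rewrite eq_ij eqxx in neq_ij.
Qed.

Lemma gib_pair_back (d a b : int) (i j : nat) : (i <= j)%N ->
  (gib a b i = gib a b j %[mod d])%Z -> (gib a b i.+1 = gib a b j.+1 %[mod d])%Z ->
  (a = gib a b (j - i) %[mod d])%Z /\ (b = gib a b (j - i).+1 %[mod d])%Z.
Proof.
have gib_pred n : gib a b n = gib a b n.+2 - gib a b n.+1 by rewrite gibSS addrK.
elim: i j => [|i IHi] [|j] //= le_ij ei ei1; rewrite ?subn0 //.
rewrite subSS; apply: IHi => //.
by rewrite (gib_pred i) (gib_pred j); apply: eqz_modD => //; apply: eqz_modN.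
Qed.

Lemma gib_periodic (m : nat) (a b : int) : (0 < m)%N ->
  exists2 P, (0 < P)%N &
    forall q t, (gib a b (q * P + t) = gib a b t %[mod m%:Z])%Z.
Proof.
move=> m_gt0; have [i [j [lt_ij ei ei1]]] := gib_pair_collision m a b m_gt0.
have [ea eb] := gib_pair_back _ _ _ _ _ (ltnW lt_ij) ei ei1.
exists (j - i)%N => [|q t]; first by rewrite subn_gt0.
have period s : (gib a b (j - i + s) = gib a b s %[mod m%:Z])%Z.
  by rewrite gib_shift; apply: gib_congr.
elim: q t => [|q IHq] t; first by rewrite mul0n add0n.
by rewrite mulSn -addnA period IHq.
Qed.

Lemma gib_recurs_after (m : nat) (a b : int) (j n : nat) : (0 < m)%N ->
  exists2 k, (0 < k)%N & (gib a b (n + k) = gib a b j %[mod m%:Z])%Z.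
Proof.
move=> m_gt0; have [P P_gt0 per] := gib_periodic m a b m_gt0.
have le_nP : (n.+1 <= n.+1 * P)%N by rewrite leq_pmulr.
exists (n.+1 * P + j - n)%N; first by lia.
by have -> : (n + (n.+1 * P + j - n) = n.+1 * P + j)%N by lia.
Qed.

Lemma complete_G_gib (a b d : int) :
  complete_mod (G a b) d -> forall r, exists n, (gib a b n = r %[mod d])%Z.
Proof. by move=> G_onto r; have [n [_ en]] := G_onto r; exists n.-1. Qed.

Lemma complete_Fib_of_gib (m : nat) (a b : int) : (0 < m)%N -> coprimez a b ->
  (forall r, exists n, (gib a b n = r %[mod m%:Z])%Z) -> complete_mod Fib m%:Z.
Proof.
move=> m_gt0 co_ab gib_onto r.
have [n en] := gib_onto 0.
have m_dvd : (m%:Z %| gib a b n)%Z by apply/dvdz_mod0P; rewrite en mod0z.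
set c := gib a b n.+1.
have co_mc : coprimez m%:Z c.
  apply: (@coprimez_dvdl _ `|gib a b n|%N); first exact: m_dvd.
  by rewrite -[coprimez _ c]/(coprimez (gib a b n) c) /coprimez gib_gcd.
have [j ej] := gib_onto (c * r).
have [k k_gt0 ek] := gib_recurs_after m a b j n m_gt0.
exists k; split => //; rewrite Fib_gib //; apply: (eqz_mod_mulKl _ _ _ _ co_mc).
by rewrite -ej -ek (gib_after_zero _ _ _ _ _ m_dvd).
Qed.

Theorem mainTheorem4 (m : nat) (hm : (2 <= m)%N) :
  defective_mod Fib m%:Z ->
  forall a b : int, gcdz a b = 1%N -> defective_mod (G a b) m%:Z.
Proof.
move=> Fib_defective a b gcd_ab G_complete; apply: Fib_defective.
apply: (complete_Fib_of_gib _ a b (ltnW hm)); first exact/eqP.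
exact: complete_G_gib.
Qed.
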